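(* Let $F\ge1$, $N_{\max}\ge1$, and let $\mathcal{L}$ be the collection of local environments with at most $N_{\max}$ elements. For $o\in\mathrm{O}(3)$ and $\mathrm{LE}\in\mathcal{L}$ put $o(\mathrm{LE})=\{(s,xo^T):(s,x)\in\mathrm{LE}\}$; call $g:\mathcal{L}\to\mathbb{R}^{3\times3}$ $\mathrm{O}(3)$-equivariant if $g(o(\mathrm{LE}))=g(\mathrm{LE})o^T$ for all $o\in\mathrm{O}(3)$ and $\mathrm{LE}\in\mathcal{L}$. Then: (a) there exists an $\mathrm{O}(3)$-equivariant $g:\mathcal{L}\to\mathbb{R}^{3\times 3}$ such that, for every $\mathrm{LE}\in\mathcal{L}$, $g(\mathrm{LE})$ has full rank if and only if there is no $o\in\mathrm{O}(3)$ with $o\neq I$ and $o(\mathrm{LE})=\mathrm{LE}$; (b) for every $\mathrm{O}(3)$-equivariant $g:\mathcal{L}\to\mathbb{R}^{3\times 3}$ and every $\mathrm{LE}\in\mathcal{L}$, if $g(\mathrm{LE})$ has full rank then there is no $o\in\mathrm{O}(3)$, $o\ne I$, with $o(\mathrm{LE})=\mathrm{LE}$.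
   Context: A local environment is a finite set $\mathrm{LE}=\{(s_j,x_j)\}$ of pairs with $s_j\in\mathbb{R}^F$ (scalar atom features) and $x_j\in\mathbb{R}^{1\times 3}$ (relative positions of neighbours of a center atom). $\mathrm{O}(3)=\{Q\in\mathbb{R}^{3\times3}: QQ^T=I\}$ and $I$ is the $3\times3$ identity matrix. *)

From HB Require Import structures.
From mathcomp Require Import all_boot all_order all_algebra.
From mathcomp Require Import finmap.
From mathcomp Require Import reals.
Set Implicit Arguments. Unset Strict Implicit. Unset Printing Implicit Defensive.
Import Order.TTheory GRing.Theory Num.Theory.
Local Open Scope ring_scope.
Local Open Scope fset_scope.

(* An atom of a local environment: scalar features s in R^F and relative
   position x in R^{1x3}. *)
Definition atom (R : realType) (F : nat) := ('rV[R]_F * 'rV[R]_3)%type.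

Definition LEnv (R : realType) (F : nat) := {fset atom R F}.

Definition inL (R : realType) (F Nmax : nat) (LE : LEnv R F) : Prop :=
  (#|` LE| <= Nmax)%N.

Definition O3 (R : realType) (o : 'M[R]_3) : Prop := o *m o^T = 1%:M.

Definition actLE (R : realType) (F : nat) (o : 'M[R]_3) (LE : LEnv R F)
  : LEnv R F :=
  [fset ((p.1, p.2 *m o^T) : atom R F) | p in LE].

(* g : L -> R^{3x3} is O(3)-equivariant (g is only constrained on L). *)
Definition equivariant (R : realType) (F Nmax : nat)
  (g : LEnv R F -> 'M[R]_3) : Prop :=
  forall (o : 'M[R]_3) (LE : LEnv R F),
    O3 o -> inL Nmax LE -> g (actLE o LE) = g LE *m o^T.

Definition has_nontriv_sym (R : realType) (F : nat) (LE : LEnv R F) : Prop :=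
  exists o : 'M[R]_3, O3 o /\ o <> 1%:M /\ actLE o LE = LE.

Definition full_rank (R : realType) (M : 'M[R]_3) : Prop := \rank M = 3%N.

From HB Require Import structures.
From mathcomp Require Import all_boot all_order all_algebra.
From mathcomp Require Import finmap.
From mathcomp Require Import reals.
From mathcomp Require Import boolp.
From mathcomp Require classical_sets.
Local Open Scope ring_scope.
Set Implicit Arguments. Unset Strict Implicit.

(* (b): if o fixes LE then g LE = g LE o^T, and cancelling the invertible
   g LE forces o = I.
   (a): choose a representative in each O(3)-orbit of environments. If LE has
   no nontrivial symmetry, the o in O(3) carrying the representative of its
   orbit to LE is unique, so it moves along with LE and o^T is an equivariant
   invertible frame; symmetric environments are sent to 0. *)

Section OrthogonalGroup.
Variable R : realType.
Implicit Types a b o : 'M[R]_3.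

Lemma O3_mulTmx o : O3 o -> o^T *m o = 1%:M.
Proof. exact: mulmx1C. Qed.

Lemma O3_trmx o : O3 o -> O3 o^T.
Proof. by move=> ho; rewrite /O3 trmxK O3_mulTmx. Qed.

Lemma O3_mul a b : O3 a -> O3 b -> O3 (a *m b).
Proof. by move=> ha hb; rewrite /O3 trmx_mul mulmxA -(mulmxA a) hb mulmx1. Qed.

Lemma O3_1 : O3 (1%:M : 'M[R]_3).
Proof. by rewrite /O3 trmx1 mulmx1. Qed.

Lemma O3_unitmx o : O3 o -> o \in unitmx.
Proof. by move=> /mulmx1_unit[]. Qed.

Lemma O3_eq_mulmxT a b : O3 b -> a *m b^T = 1%:M -> a = b.
Proof. by move=> hb e; rewrite -(mulmx1 a) -(O3_mulTmx hb) mulmxA e mul1mx. Qed.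

End OrthogonalGroup.

Section Action.
Variables (R : realType) (F : nat).
Implicit Types (a b o q : 'M[R]_3) (LE : LEnv R F).

Lemma actLE_mul a b LE : actLE a (actLE b LE) = actLE (a *m b) LE.
Proof.
apply/fsetP => x; apply/imfsetP/imfsetP => /=.
- move=> [y /imfsetP [z /= zin ->] ->] /=.
  by exists z => //; rewrite trmx_mul mulmxA.
- move=> [z zin ->]; exists ((z.1, z.2 *m b^T) : atom R F).
    by apply/imfsetP; exists z.
  by rewrite /= trmx_mul mulmxA.
Qed.

Lemma actLE1 LE : actLE 1%:M LE = LE.
Proof.
apply/fsetP => x; apply/imfsetP/idP => /=.
- by move=> [z zin ->]; rewrite trmx1 mulmx1 -surjective_pairing.
- by move=> xin; exists x => //; rewrite trmx1 mulmx1 -surjective_pairing.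
Qed.

Lemma actLEK q LE : O3 q -> actLE q^T (actLE q LE) = LE.
Proof. by move=> hq; rewrite actLE_mul O3_mulTmx ?actLE1. Qed.

(* A symmetry o of LE is conjugated to the symmetry q o q^T of q(LE). *)
Lemma has_nontriv_sym_act q LE :
  O3 q -> has_nontriv_sym LE -> has_nontriv_sym (actLE q LE).
Proof.
move=> hq [o [ho [o_neq1 fix_o]]].
exists (q *m o *m q^T); split; first by apply: O3_mul; [apply: O3_mul|apply: O3_trmx].
split.
- move=> e; apply: o_neq1.
  have : q^T *m (q *m o *m q^T) *m q = q^T *m 1%:M *m q by rewrite e.
  by rewrite !mulmxA O3_mulTmx // mul1mx -mulmxA O3_mulTmx // !mulmx1 O3_mulTmx.
- by rewrite !actLE_mul -(mulmxA _ q^T) O3_mulTmx // mulmx1 -actLE_mul fix_o.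
Qed.

Lemma has_nontriv_symE q LE :
  O3 q -> has_nontriv_sym (actLE q LE) <-> has_nontriv_sym LE.
Proof.
move=> hq; split; last exact: has_nontriv_sym_act.
by move=> /(has_nontriv_sym_act (O3_trmx hq)); rewrite actLEK.
Qed.

Lemma actLE_inj_no_sym a b LE :
  ~ has_nontriv_sym (actLE a LE) -> O3 a -> O3 b ->
  actLE a LE = actLE b LE -> a = b.
Proof.
move=> no_sym ha hb eab; suff: a *m b^T = 1%:M by exact: O3_eq_mulmxT.
case: (eqVneq (a *m b^T) 1%:M) => // neq1; exfalso; apply: no_sym.
exists (a *m b^T); split; first by apply: O3_mul (O3_trmx hb).
split; first exact/eqP.
by rewrite {1}eab -actLE_mul actLEK.
Qed.

Definition orbit LE : LEnv R F -> Prop :=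
  fun L' => exists o, O3 o /\ L' = actLE o LE.

Lemma orbit_act q LE : O3 q -> orbit (actLE q LE) = orbit LE.
Proof.
move=> hq; apply: funext => L'; apply: propext; split.
- move=> [o [ho ->]]; exists (o *m q).
  by split; [exact: O3_mul | rewrite actLE_mul].
- move=> [o [ho ->]]; exists (o *m q^T); split; first exact: O3_mul (O3_trmx hq).
  by rewrite actLE_mul -mulmxA O3_mulTmx // mulmx1.
Qed.

Definition orbit_rep LE : LEnv R F := classical_sets.xget fset0 (orbit LE).

Lemma orbit_rep_act q LE : O3 q -> orbit_rep (actLE q LE) = orbit_rep LE.
Proof. by move=> hq; rewrite /orbit_rep orbit_act. Qed.

Lemma orbit_repP LE : orbit LE (orbit_rep LE).
Proof.
apply: classical_sets.xgetPex; exists LE; exists 1%:M.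
by rewrite actLE1; split; [exact: O3_1|].
Qed.

Definition frame LE : 'M[R]_3 :=
  classical_sets.xget 0 (fun o => O3 o /\ LE = actLE o (orbit_rep LE)).

Lemma frameP LE : O3 (frame LE) /\ LE = actLE (frame LE) (orbit_rep LE).
Proof.
have [p [hp erep]] := orbit_repP LE.
have ex_frame : exists o, O3 o /\ LE = actLE o (orbit_rep LE).
  by exists p^T; rewrite erep actLEK //; split; [exact: O3_trmx|].
exact: classical_sets.xgetPex ex_frame.
Qed.

Lemma frame_act q LE :
  O3 q -> ~ has_nontriv_sym LE -> frame (actLE q LE) = q *m frame LE.
Proof.
move=> hq no_sym; have [hf ef] := frameP LE.
have [hqf eqf] := frameP (actLE q LE); rewrite orbit_rep_act // in eqf.
apply: (actLE_inj_no_sym (LE := orbit_rep LE)); rewrite -?eqf.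
- by rewrite has_nontriv_symE.
- exact: hqf.
- exact: O3_mul.
- by rewrite -actLE_mul -ef.
Qed.

Definition canon_frame LE : 'M[R]_3 :=
  if pselect (has_nontriv_sym LE) then 0 else (frame LE)^T.

Lemma canon_frame_equivariant Nmax : equivariant Nmax canon_frame.
Proof.
move=> q LE hq _; rewrite /canon_frame.
case: pselect => [sym_qLE|no_sym_qLE]; case: pselect => [sym_LE|no_sym_LE].
- by rewrite mul0mx.
- by case: no_sym_LE; apply/(has_nontriv_symE _ hq).
- by case: no_sym_qLE; apply: has_nontriv_sym_act.
- by rewrite frame_act // trmx_mul.
Qed.

Lemma full_rank_canon_frame LE :
  full_rank (canon_frame LE) <-> ~ has_nontriv_sym LE.
Proof.
rewrite /canon_frame /full_rank; case: pselect => sym_LE.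
- by rewrite mxrank0; split.
- split=> // _; apply/eqP; change (row_free (frame LE)^T).
  by rewrite row_free_unit unitmx_tr; apply: O3_unitmx; case: (frameP LE).
Qed.

Lemma full_rank_equivariant_no_sym Nmax (g : LEnv R F -> 'M[R]_3) LE :
  equivariant Nmax g -> inL Nmax LE -> full_rank (g LE) -> ~ has_nontriv_sym LE.
Proof.
move=> eqv_g hL rk [o [ho [o_neq1 fix_o]]]; apply: o_neq1.
have gLE_unit : g LE \in unitmx by rewrite -row_free_unit /row_free rk.
have e : g LE *m o^T = g LE by rewrite -eqv_g // fix_o.
have oT1 : o^T = 1%:M by rewrite -(mulKmx gLE_unit o^T) e mulVmx.
by rewrite -[o]trmxK oT1 trmx1.
Qed.

End Action.

Theorem theorem1 (R : realType) (F Nmax : nat) :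
  (1 <= F)%N -> (1 <= Nmax)%N ->
  (exists g : LEnv R F -> 'M[R]_3,
      equivariant Nmax g /\
      forall LE : LEnv R F, inL Nmax LE ->
        (full_rank (g LE) <-> ~ has_nontriv_sym LE))
  /\
  (forall g : LEnv R F -> 'M[R]_3, equivariant Nmax g ->
     forall LE : LEnv R F, inL Nmax LE ->
       full_rank (g LE) -> ~ has_nontriv_sym LE).
Proof.
move=> _ _; split.
- exists (@canon_frame R F); split; first exact: canon_frame_equivariant.
  move=> LE _; exact: full_rank_canon_frame.
- move=> g eqv_g LE; exact: full_rank_equivariant_no_sym.
Qed.
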